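(* Let $\Sigma$ be an LF signature and $a : \Pi\Gamma^I.\Pi\Gamma^O.\mathsf{type}$ a type family in $\Sigma$ with a well-defined mode, and let $\Delta$ consist of the single assumption $\forall\Gamma^I.\exists\Gamma^O.\exists D{:}a\,\Gamma^I\,\Gamma^O.\top$. Let $G$ be an input coverage goal $\Gamma^I_1, x{:}A_x, \Gamma^I_2 \vdash_\Sigma A : \Pi\Gamma^O.\mathsf{type}$ with $A_x$ atomic, and let $S$ be the M2 sequent $\Gamma^I_1, x{:}A_x, \Gamma^I_2;\ \Delta \vdash \exists\Gamma^O.\exists D{:}A\,\Gamma^O.\top$, so that $G \approx S$. Suppose splitting on $x$ in $G$ is applicable. If $\mathcal{G}$ is the set of subgoals resulting from splitting on $x$ in $G$ and $\mathcal{S}$ is the set of premise sequents resulting from applying the case rule to $x$ in $S$, then $\mathcal{G} \approx \mathcal{S}$.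
   Context: LF (Edinburgh Logical Framework) terms, signatures $\Sigma$, contexts $\Gamma$, substitutions $\sigma$ with $t[\sigma]$ their capture-avoiding application, and the judgment $\Gamma'\vdash_\Sigma \sigma:\Gamma$ (meaning $\sigma$ maps each $x{:}A$ of $\Gamma$ to a term of type $A[\sigma]$ in $\Gamma'$) are as usual. For a context $\Gamma = x_1{:}A_1,\dots,x_n{:}A_n$, $M\,\Gamma$ abbreviates $M\,x_1\cdots x_n$ and $\Pi\Gamma.B$ abbreviates $\Pi x_1{:}A_1.\cdots\Pi x_n{:}A_n.B$. A type family $a:\Pi\Gamma^I.\Pi\Gamma^O.\mathsf{type}$ has a well-defined mode when its parameters are split into inputs $\Gamma^I$ and outputs $\Gamma^O$ with input parameter types depending only on input parameters. A unifier of a set of equations between LF terms is a substitution making both sides equal; it is most general (mgu) if every unifier factors through it. Input coverage goal: a valid LF judgment $\Gamma \vdash_\Sigma A : \Pi\Gamma^O.\mathsf{type}$. Splitting: given such a goal with $\Gamma = \Gamma_1, x{:}A_x, \Gamma_2$, $A_x$ atomic, splitting is applicable if for every constant $c:\Pi\Gamma_c.A_c$ in $\Sigma$ the unification problem $\{A_x = A_c,\ x = c\,\Gamma_c\}$ either has no solution or has an mgu; it then produces the set of subgoals $\Gamma', \Gamma_2[\sigma] \vdash_\Sigma A[\sigma] : \Pi\Gamma^O[\sigma].\mathsf{type}$, one for each constant $c:\Pi\Gamma_c.A_c\in\Sigma$ whose problem is unifiable, where $\sigma$ is its mgu and $\Gamma' \vdash_\Sigma \sigma : (\Gamma_1, x{:}A_x,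 \Gamma_c)$. M2 sequents have the form $\Gamma;\Delta \vdash F$ with $\Gamma$ an LF context, $\Delta$ a list of assumption formulas and $F$ a formula of the form $\forall\Gamma_1.\exists\Gamma_2.\top$. The case rule applied to $x$ in a sequent $\Gamma_1, x{:}A_x, \Gamma_2;\Delta\vdash F$ (with $A_x$ atomic) has one premise $\Gamma', \Gamma_2[\sigma];\ \Delta[\sigma] \vdash F[\sigma]$ for each constant $c:\Pi\Gamma_c.A_c\in\Sigma$ for which $\{A_x = A_c, x = c\,\Gamma_c\}$ is unifiable, with $\sigma$ its mgu and $\Gamma'\vdash_\Sigma\sigma:(\Gamma_1,x{:}A_x,\Gamma_c)$ (constants whose problem has no solution contribute no premise; the rule requires that each problem either has no solution or has an mgu). Relation $\approx$: for an input coverage goal $G$ and an M2 sequent $S$, $G \approx S$ holds iff $G$ is $\Gamma^I \vdash_\Sigma A : \Pi\Gamma^O.\mathsf{type}$ and $S$ is $\Gamma^I;\Delta \vdash \exists\Gamma^O.\exists D{:}A\,\Gamma^O.\top$ where $\Delta$ is the assumption $\forall\Gamma^I.\exists\Gamma^O.\exists D{:}a\,\Gamma^I\,\Gamma^O.\top$ (with $\Gamma^I,\Gamma^O$ here the input and output parameters of $a$). For finite sets $\mathcal{G} = \{G_i\mid 1\le i\le n\}$ and $\mathcal{S} = \{S_i\mid 1\le i\le n\}$, $\mathcal{G}\approx\mathcal{S}$ iff $G_i \approx S_i$ for all $1\le i\le n$. *)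

From Stdlib Require Import List Arith.
Import ListNotations.

Inductive sort : Type := SType | SKind.

Inductive term : Type :=
| Var   : nat -> term              (* de Bruijn index, 0 = innermost *)
| Const : nat -> term
| App   : term -> term -> term
| Lam   : term -> term -> term
| Pi    : term -> term -> term
| Srt   : sort -> term.

(* Contexts: list of types, outermost binding first.  Var n refers to the
   n-th entry counted from the END of the list. *)
Definition ctx := list term.
Definition signature := list (nat * term).

Definition upren (xi : nat -> nat) (n : nat) : nat :=
  match n with 0 => 0 | S m => S (xi m) end.

Fixpoint ren (xi : nat -> nat) (t : term) : term :=
  match t with
  | Var n => Var (xi n)
  | Const c => Const c
  | App M N => App (ren xi M) (ren xi N)
  | Lam A M => Lam (ren xi A) (ren (upren xi) M)
  | Pi A B => Pi (ren xi A) (ren (upren xi) B)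
  | Srt s => Srt s
  end.

Definition shift (k : nat) (t : term) : term := ren (fun n => k + n) t.

Definition up (sigma : nat -> term) (n : nat) : term :=
  match n with 0 => Var 0 | S m => ren S (sigma m) end.

Fixpoint upn (k : nat) (sigma : nat -> term) : nat -> term :=
  match k with 0 => sigma | S k' => up (upn k' sigma) end.

Fixpoint subst (sigma : nat -> term) (t : term) : term :=
  match t with
  | Var n => sigma n
  | Const c => Const c
  | App M N => App (subst sigma M) (subst sigma N)
  | Lam A M => Lam (subst sigma A) (subst (up sigma) M)
  | Pi A B => Pi (subst sigma A) (subst (up sigma) B)
  | Srt s => Srt s
  end.

Definition scons (N : term) (sigma : nat -> term) (n : nat) : term :=
  match n with 0 => N | S m => sigma m end.

Fixpoint subst_ctx (sigma : nat -> term) (G : ctx) : ctx :=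
  match G with
  | [] => []
  | A :: G' => subst sigma A :: subst_ctx (up sigma) G'
  end.

Definition pis (G : ctx) (B : term) : term := fold_right Pi B G.

Definition apps (h : term) (args : list term) : term := fold_left App args h.

(* the variables of a context of length n, outermost first:
   [Var (n-1); ...; Var 0], so that  M Gamma = apps M (vars (length Gamma)) *)
Definition vars (n : nat) : list term := rev (map Var (seq 0 n)).

Definition is_atomic (t : term) : Prop :=
  exists c args, t = apps (Const c) args.

Inductive conv : term -> term -> Prop :=
| conv_refl t : conv t t
| conv_sym t u : conv t u -> conv u t
| conv_trans t u v : conv t u -> conv u v -> conv t v
| conv_beta A M N : conv (App (Lam A M) N) (subst (scons N Var) M)
| conv_eta A M : conv (Lam A (App (shift 1 M) (Var 0))) M
| conv_App M M' N N' : conv M M' -> conv N N' -> conv (App M N) (App M' N')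
| conv_Lam A A' M M' : conv A A' -> conv M M' -> conv (Lam A M) (Lam A' M')
| conv_Pi A A' B B' : conv A A' -> conv B B' -> conv (Pi A B) (Pi A' B').

Inductive typ (Sg : signature) : ctx -> term -> term -> Prop :=
| T_Ax G : wf_ctx Sg G -> typ Sg G (Srt SType) (Srt SKind)
| T_Var G n A : wf_ctx Sg G -> nth_error (rev G) n = Some A ->
    typ Sg G (Var n) (shift (S n) A)
| T_Const G c T : wf_ctx Sg G -> In (c, T) Sg -> typ Sg G (Const c) T
| T_Pi G A B s : typ Sg G A (Srt SType) -> typ Sg (G ++ [A]) B (Srt s) ->
    typ Sg G (Pi A B) (Srt s)
| T_Lam G A M B s : typ Sg G A (Srt SType) -> typ Sg (G ++ [A]) B (Srt s) ->
    typ Sg (G ++ [A]) M B -> typ Sg G (Lam A M) (Pi A B)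
| T_App G M N A B : typ Sg G M (Pi A B) -> typ Sg G N A ->
    typ Sg G (App M N) (subst (scons N Var) B)
| T_Conv G M A B s : typ Sg G M A -> conv A B -> typ Sg G B (Srt s) ->
    typ Sg G M B
with wf_ctx (Sg : signature) : ctx -> Prop :=
| W_nil : wf_ctx Sg []
| W_snoc G A : typ Sg G A (Srt SType) -> wf_ctx Sg (G ++ [A]).

Inductive sig_ok : signature -> Prop :=
| S_nil : sig_ok []
| S_snoc Sg c T s : sig_ok Sg -> (forall T', ~ In (c, T') Sg) ->
    typ Sg [] T (Srt s) -> sig_ok (Sg ++ [(c, T)]).

Definition sub_typed (Sg : signature) (G' : ctx) (sigma : nat -> term) (G : ctx) : Prop :=
  wf_ctx Sg G' /\
  forall n A, nth_error (rev G) n = Some A ->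
    typ Sg G' (sigma n) (subst sigma (shift (S n) A)).

Definition unifier (Sg : signature) (Gd : ctx) (eqs : list (term * term))
    (G'' : ctx) (theta : nat -> term) : Prop :=
  sub_typed Sg G'' theta Gd /\
  Forall (fun e => conv (subst theta (fst e)) (subst theta (snd e))) eqs.

Definition mgu (Sg : signature) (Gd : ctx) (eqs : list (term * term))
    (G' : ctx) (sigma : nat -> term) : Prop :=
  unifier Sg Gd eqs G' sigma /\
  forall G'' theta, unifier Sg Gd eqs G'' theta ->
    exists rho, sub_typed Sg G'' rho G' /\
      forall n, n < length Gd -> conv (theta n) (subst rho (sigma n)).

Definition decl (Sg : signature) (c : nat) (Gc : ctx) (Ac : term) : Prop :=
  In (c, pis Gc Ac) Sg /\ is_atomic Ac.

(* The problem {A_x = A_c, x = c Gc}, over the context (G1, x:Ax, Gc). *)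
Definition uctx (G1 : ctx) (Ax : term) (Gc : ctx) : ctx := G1 ++ Ax :: Gc.
Definition ueqs (Ax : term) (c : nat) (Gc : ctx) (Ac : term) : list (term * term) :=
  [ (shift (S (length Gc)) Ax, Ac) ;
    (Var (length Gc), apps (Const c) (vars (length Gc))) ].

Definition unifiable Sg G1 Ax c Gc Ac : Prop :=
  exists G'' theta, unifier Sg (uctx G1 Ax Gc) (ueqs Ax c Gc Ac) G'' theta.

(* applicability of splitting (= side condition of the case rule) *)
Definition split_applicable (Sg : signature) (G1 : ctx) (Ax : term) : Prop :=
  forall c Gc Ac, decl Sg c Gc Ac ->
    ~ unifiable Sg G1 Ax c Gc Ac \/
    exists G' sigma, mgu Sg (uctx G1 Ax Gc) (ueqs Ax c Gc Ac) G' sigma.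

(* A choice, for each unifiable constant, of an mgu sigma with
   G' |- sigma : (G1, x:Ax, Gc).  Entries: (c, Gc, Ac, G', sigma). *)
Record choice := mkChoice
  { ch_c : nat; ch_Gc : ctx; ch_Ac : term; ch_G' : ctx; ch_sigma : nat -> term }.

Definition valid_choice (Sg : signature) (G1 : ctx) (Ax : term) (ch : list choice) : Prop :=
  (forall e, In e ch ->
     decl Sg (ch_c e) (ch_Gc e) (ch_Ac e) /\
     mgu Sg (uctx G1 Ax (ch_Gc e)) (ueqs Ax (ch_c e) (ch_Gc e) (ch_Ac e))
         (ch_G' e) (ch_sigma e)) /\
  NoDup (map ch_c ch) /\
  (forall c Gc Ac, decl Sg c Gc Ac -> unifiable Sg G1 Ax c Gc Ac ->
     exists e, In e ch /\ ch_c e = c).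

(* restriction of sigma : (G1,x,Gc) to (G1,x), for applying to Gamma2 etc. *)
Definition restr (e : choice) : nat -> term :=
  fun n => ch_sigma e (n + length (ch_Gc e)).

Record goal := mkGoal { g_ctx : ctx; g_fam : term; g_kind : term }.

Definition split_subgoal (G2 : ctx) (A K : term) (e : choice) : goal :=
  mkGoal (ch_G' e ++ subst_ctx (restr e) G2)
         (subst (upn (length G2) (restr e)) A)
         (subst (upn (length G2) (restr e)) K).

Definition split_subgoals (G2 : ctx) (g : goal) (ch : list choice) : list goal :=
  map (split_subgoal G2 (g_fam g) (g_kind g)) ch.

Inductive form : Type :=
| FAll : term -> form -> form
| FEx  : term -> form -> form
| FTop : form.

Fixpoint fsubst (sigma : nat -> term) (F : form) : form :=
  match F with
  | FAll A F' => FAll (subst sigma A) (fsubst (up sigma) F')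
  | FEx A F' => FEx (subst sigma A) (fsubst (up sigma) F')
  | FTop => FTop
  end.

Definition alls (G : ctx) (F : form) : form := fold_right FAll F G.
Definition exs (G : ctx) (F : form) : form := fold_right FEx F G.

Record sequent := mkSeq { s_ctx : ctx; s_hyps : list form; s_concl : form }.

Definition case_premise (G2 : ctx) (D : list form) (F : form) (e : choice) : sequent :=
  mkSeq (ch_G' e ++ subst_ctx (restr e) G2)
        (map (fsubst (upn (length G2) (restr e))) D)
        (fsubst (upn (length G2) (restr e)) F).

Definition case_premises (G2 : ctx) (S : sequent) (ch : list choice) : list sequent :=
  map (case_premise G2 (s_hyps S) (s_concl S)) ch.

Definition Delta_a (a : nat) (aI aO : ctx) : form :=
  alls aI (exs aO (FEx (apps (Const a) (vars (length aI + length aO))) FTop)).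

(* exists GO. exists D : A GO. T   (A lives outside GO) *)
Definition goal_formula (GO : ctx) (A : term) : form :=
  exs GO (FEx (apps (shift (length GO) A) (vars (length GO))) FTop).

Definition approx (a : nat) (aI aO : ctx) (g : goal) (S : sequent) : Prop :=
  exists GI A GO,
    g = mkGoal GI A (pis GO (Srt SType)) /\
    S = mkSeq GI [Delta_a a aI aO] (goal_formula GO A).

Definition approx_sets (a : nat) (aI aO : ctx) (Gs : list goal) (Ss : list sequent) : Prop :=
  Forall2 (approx a aI aO) Gs Ss.

(* The subgoals of splitting and the premises of the case rule are built from
   the same most general unifiers, and applying one substitution to a goal and
   to its sequent preserves ~: substitution commutes with the Pi-telescope of
   the goal's kind and with the existential prefix of the goal formula, while
   the induction hypothesis Delta is closed (its type family is declared in a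
   valid signature), so the case rule leaves it unchanged. *)
From Stdlib Require Import List Arith Lia.
Import ListNotations.

Lemma ren_ext xi zeta t : (forall n, xi n = zeta n) -> ren xi t = ren zeta t.
Proof.
  revert xi zeta; induction t; intros xi zeta H; simpl; f_equal; auto;
    apply IHt2; intros [|n]; simpl; auto.
Qed.

Lemma ren_id t : ren (fun n => n) t = t.
Proof.
  induction t; simpl; f_equal; auto;
    rewrite <- IHt2 at 2; apply ren_ext; intros [|n]; reflexivity.
Qed.

Lemma ren_ren xi zeta t : ren xi (ren zeta t) = ren (fun n => xi (zeta n)) t.
Proof.
  revert xi zeta; induction t; intros xi zeta; simpl; f_equal; auto;
    rewrite IHt2; apply ren_ext; intros [|n]; reflexivity.
Qed.

Lemma subst_ext s1 s2 t : (forall n, s1 n = s2 n) -> subst s1 t = subst s2 t.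
Proof.
  revert s1 s2; induction t; intros s1 s2 H; simpl; f_equal; auto;
    apply IHt2; intros [|n]; simpl; rewrite ?H; reflexivity.
Qed.

Lemma subst_ren sg xi t : subst sg (ren xi t) = subst (fun n => sg (xi n)) t.
Proof.
  revert sg xi; induction t; intros sg xi; simpl; f_equal; auto;
    rewrite IHt2; apply subst_ext; intros [|n]; reflexivity.
Qed.

Lemma ren_subst xi sg t : ren xi (subst sg t) = subst (fun n => ren xi (sg n)) t.
Proof.
  revert sg xi; induction t; intros sg xi; simpl; f_equal; auto;
    rewrite IHt2; apply subst_ext; intros [|n]; simpl; auto;
    rewrite !ren_ren; apply ren_ext; reflexivity.
Qed.

Lemma upn_up k sg : upn k (up sg) = upn (S k) sg.
Proof. induction k; simpl; [reflexivity | rewrite IHk; reflexivity]. Qed.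

Lemma upn_lt k sg i : i < k -> upn k sg i = Var i.
Proof.
  revert i; induction k; intros [|i] Hi; simpl; try lia; auto.
  rewrite IHk by lia; reflexivity.
Qed.

Lemma upn_add k sg i : upn k sg (k + i) = shift k (sg i).
Proof.
  induction k; simpl; unfold shift in *.
  - symmetry; apply ren_id.
  - rewrite IHk, ren_ren; apply ren_ext; intros; lia.
Qed.

Lemma subst_shift k sg t : subst (upn k sg) (shift k t) = shift k (subst sg t).
Proof.
  unfold shift; rewrite subst_ren, ren_subst.
  apply subst_ext; intro n; apply upn_add.
Qed.

Lemma subst_apps sg h args :
  subst sg (apps h args) = apps (subst sg h) (map (subst sg) args).
Proof. revert h; induction args; intros h; simpl; auto. Qed.

Lemma map_subst_vars k sg : map (subst (upn k sg)) (vars k) = vars k.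
Proof.
  unfold vars; rewrite map_rev, map_map; f_equal.
  apply map_ext_in; intros i Hi; apply in_seq in Hi; apply upn_lt; lia.
Qed.

Lemma length_subst_ctx G sg : length (subst_ctx sg G) = length G.
Proof. revert sg; induction G; intros sg; simpl; auto. Qed.

Lemma subst_pis G sg B :
  subst sg (pis G B) = pis (subst_ctx sg G) (subst (upn (length G) sg) B).
Proof.
  revert sg; induction G; intros sg; simpl; auto.
  rewrite IHG, upn_up; reflexivity.
Qed.

Lemma fsubst_exs G sg F :
  fsubst sg (exs G F) = exs (subst_ctx sg G) (fsubst (upn (length G) sg) F).
Proof.
  revert sg; induction G; intros sg; simpl; auto.
  rewrite IHG, upn_up; reflexivity.
Qed.

Lemma fsubst_goal_formula sg GO A :
  fsubst sg (goal_formula GO A) = goal_formula (subst_ctx sg GO) (subst sg A).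
Proof.
  unfold goal_formula; rewrite fsubst_exs, length_subst_ctx; simpl.
  rewrite subst_apps, subst_shift, map_subst_vars; reflexivity.
Qed.

Fixpoint closed_at (k : nat) (t : term) : Prop :=
  match t with
  | Var n => n < k
  | Const _ | Srt _ => True
  | App M N => closed_at k M /\ closed_at k N
  | Lam A M | Pi A M => closed_at k A /\ closed_at (S k) M
  end.

Fixpoint fclosed_at (k : nat) (F : form) : Prop :=
  match F with
  | FAll A F' | FEx A F' => closed_at k A /\ fclosed_at (S k) F'
  | FTop => True
  end.

Lemma subst_closed k sg t : closed_at k t -> subst (upn k sg) t = t.
Proof.
  revert k; induction t; intros k H; simpl in *; try reflexivity.
  - apply upn_lt; exact H.
  - f_equal; [apply IHt1 | apply IHt2]; tauto.
  - f_equal; [apply IHt1 | apply (IHt2 (S k))]; tauto.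
  - f_equal; [apply IHt1 | apply (IHt2 (S k))]; tauto.
Qed.

Lemma fsubst_closed k sg F : fclosed_at k F -> fsubst (upn k sg) F = F.
Proof.
  revert k; induction F; intros k H; simpl in *; try reflexivity;
    (f_equal; [apply subst_closed | apply (IHF (S k))]; tauto).
Qed.

Lemma closed_apps k h args :
  closed_at k h -> Forall (closed_at k) args -> closed_at k (apps h args).
Proof.
  revert h; induction args; intros h Hh Hargs; simpl; auto.
  inversion Hargs; subst; apply IHargs; simpl; auto.
Qed.

Lemma closed_vars k : Forall (closed_at k) (vars k).
Proof.
  unfold vars; apply Forall_rev, Forall_forall; intros x Hx.
  apply in_map_iff in Hx as [i [<- Hi]]; apply in_seq in Hi; simpl; lia.
Qed.

Lemma closed_pis_body G k B : closed_at k (pis G B) -> closed_at (length G + k) B.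
Proof.
  revert k; induction G; intros k H; simpl in *; auto.
  rewrite <- Nat.add_succ_r; apply IHG; tauto.
Qed.

Lemma fclosed_alls G k B F :
  closed_at k (pis G B) -> fclosed_at (length G + k) F -> fclosed_at k (alls G F).
Proof.
  revert k; induction G; intros k HG HF; simpl in *; auto.
  split; [tauto|]; apply IHG; [tauto | rewrite Nat.add_succ_r; exact HF].
Qed.

Lemma fclosed_exs G k B F :
  closed_at k (pis G B) -> fclosed_at (length G + k) F -> fclosed_at k (exs G F).
Proof.
  revert k; induction G; intros k HG HF; simpl in *; auto.
  split; [tauto|]; apply IHG; [tauto | rewrite Nat.add_succ_r; exact HF].
Qed.

Lemma typ_closed Sg G t T : typ Sg G t T -> closed_at (length G) t.
Proof.
  induction 1; simpl; auto;
    rewrite ?length_app, ?Nat.add_1_r in *; simpl in *; auto.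
  rewrite <- length_rev; apply nth_error_Some; congruence.
Qed.

Lemma sig_ok_closed Sg c T : sig_ok Sg -> In (c, T) Sg -> closed_at 0 T.
Proof.
  intros HSg; revert c T; induction HSg; intros c' T' Hin; [contradiction|].
  apply in_app_or in Hin as [Hin | [E | []]]; eauto.
  injection E as <- <-; exact (typ_closed _ _ _ _ H0).
Qed.

Lemma Delta_a_closed Sg a aI aO :
  sig_ok Sg -> In (a, pis aI (pis aO (Srt SType))) Sg ->
  fclosed_at 0 (Delta_a a aI aO).
Proof.
  intros HSg Ha; pose proof (sig_ok_closed _ _ _ HSg Ha) as Hclosed.
  unfold Delta_a; eapply fclosed_alls; [exact Hclosed|].
  apply closed_pis_body in Hclosed; eapply fclosed_exs; [exact Hclosed|].
  simpl; split; auto; apply closed_apps; simpl; auto.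
  rewrite Nat.add_0_r, Nat.add_comm; apply closed_vars.
Qed.

Lemma approx_subst a aI aO G' sg A GO :
  fclosed_at 0 (Delta_a a aI aO) ->
  approx a aI aO
    (mkGoal G' (subst sg A) (subst sg (pis GO (Srt SType))))
    (mkSeq G' (map (fsubst sg) [Delta_a a aI aO]) (fsubst sg (goal_formula GO A))).
Proof.
  intros HDelta; exists G', (subst sg A), (subst_ctx sg GO); split.
  - rewrite subst_pis; reflexivity.
  - simpl; rewrite fsubst_goal_formula.
    pose proof (fsubst_closed 0 sg _ HDelta) as HDelta_fixed; simpl in HDelta_fixed.
    rewrite HDelta_fixed; reflexivity.
Qed.

Theorem mainTheorem2 (Sg : signature) (a : nat) (aI aO : ctx)
  (G1 G2 : ctx) (Ax A : term) (GO : ctx) (ch : list choice) :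
  sig_ok Sg ->
  In (a, pis aI (pis aO (Srt SType))) Sg ->
  is_atomic Ax ->
  typ Sg (G1 ++ Ax :: G2) A (pis GO (Srt SType)) ->
  split_applicable Sg G1 Ax ->
  valid_choice Sg G1 Ax ch ->
  approx_sets a aI aO
    (split_subgoals G2 (mkGoal (G1 ++ Ax :: G2) A (pis GO (Srt SType))) ch)
    (case_premises G2 (mkSeq (G1 ++ Ax :: G2) [Delta_a a aI aO] (goal_formula GO A)) ch).
Proof.
  intros HSg Ha _ _ _ _.
  pose proof (Delta_a_closed _ _ _ _ HSg Ha) as HDelta.
  unfold approx_sets, split_subgoals, case_premises; simpl.
  induction ch as [|e ch IH]; simpl; constructor; auto.
  apply approx_subst; exact HDelta.
Qed.
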